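(* Let $(\Omega,\mathcal{M})$ be a measurable space, $f\in\mathcal{F}_1(a,b)$, and $w_0=f'_+(1)$ (the right derivative of $f$ at $1$). Suppose $w_0$ lies in the interior of $\{f^*<\infty\}$ and $f$ is strictly convex on a neighborhood of $1$. If $P_n,P$ are probability measures on $\Omega$ and either $D_f(P_n\|P)\to0$ or $D_f(P\|P_n)\to0$, then $P_n\to P$ setwise, i.e. $P_n(A)\to P(A)$ for all $A\in\mathcal{M}$. If moreover $\Omega$ is a metric space and $\mathcal{M}$ its Borel $\sigma$-algebra, then $P_n\to P$ weakly.
   Context: For $-\infty\le a<1<b\le\infty$, $\mathcal{F}_1(a,b)$ is the set of convex functions $f:(a,b)\to\mathbb{R}$ with $f(1)=0$; $f$ is extended to $[a,b]$ by continuity and set to $\infty$ outside $[a,b]$. The $f$-divergence of probability measures is $D_f(\nu\|\mu)=E_\mu[f(d\nu/d\mu)]$ if $\nu\ll\mu$ and $\infty$ otherwise. $f^*(y)=\sup_{z}\{yz-f(z)\}$ is the Legendre transform of $f$. *)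

From HB Require Import structures.
From mathcomp Require Import all_boot all_order all_algebra.
From mathcomp Require Import all_classical all_reals all_analysis.
Set Implicit Arguments. Unset Strict Implicit. Unset Printing Implicit Defensive.
Import Order.TTheory GRing.Theory Num.Theory.
Import numFieldNormedType.Exports.
Local Open Scope classical_set_scope.
Local Open Scope ring_scope.

Section fdiv_defs.
Context {R : realType}.

Definition oitv (a b : \bar R) : set R := [set x : R | (a < x%:E < b)%E].

Definition convex_on (f : R -> R) (I : set R) : Prop :=
  forall x y t, I x -> I y -> 0 <= t <= 1 ->
    f (t * x + (1 - t) * y) <= t * f x + (1 - t) * f y.

Definition strictly_convex_on (f : R -> R) (I : set R) : Prop :=
  forall x y t, I x -> I y -> x != y -> 0 < t < 1 ->
    f (t * x + (1 - t) * y) < t * f x + (1 - t) * f y.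

Definition F1 (a b : \bar R) (f : R -> R) : Prop :=
  [/\ (a < 1%:E)%E, (1%:E < b)%E, convex_on f (oitv a b) & f 1 = 0].

Definition fext (a b : \bar R) (f : R -> R) (x : R) : \bar R :=
  if (a < x%:E < b)%E then (f x)%:E
  else if a == x%:E then lim ((fun y => (f y)%:E) @ x^'+)
  else if b == x%:E then lim ((fun y => (f y)%:E) @ x^'-)
  else +oo%E.

Definition rderiv (f : R -> R) (x : R) : R :=
  lim ((fun h => (f (x + h) - f x) / h) @ 0^'+).

Definition legendre (a b : \bar R) (f : R -> R) (y : R) : \bar R :=
  ereal_sup (range (fun z : R => ((y * z)%:E - fext a b f z)%E)).

Definition fdiv d (T : measurableType d) (a b : \bar R) (f : R -> R)
    (nu mu : probability T R) : \bar R :=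
  if pselect (nu `<< mu) then
    (\int[mu]_x fext a b f (fine (Radon_Nikodym (charge_of_finite_measure nu) mu x)))%E
  else +oo%E.

End fdiv_defs.

From HB Require Import structures.
From mathcomp Require Import all_boot all_order all_algebra.
From mathcomp Require Import all_classical all_reals all_analysis.
From mathcomp Require Import ring lra measurable_realfun.
Import Order.TTheory GRing.Theory Num.Theory.
Import numFieldNormedType.Exports.
Local Open Scope classical_set_scope.
Local Open Scope ring_scope.

(* Let s be a subgradient of f at 1, so that h x := f x - s (x - 1) is convex,
   nonnegative and vanishes at 1. Strict convexity near 1 gives h (1 +- dl) > 0,
   and convexity then forces linear growth: h x >= k (|x - 1| - dl) for some
   k > 0, also at the endpoints of (a, b) where fext is a one-sided limit.
   Composing with the density rho = d nu / d mu, whose affine part integrates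
   to 0, yields D_f(nu || mu) >= k (||rho - 1||_{L^1(mu)} - dl). As
   |int g d nu - int g d mu| <= sup |g| ||rho - 1||_{L^1(mu)}, and dl is
   arbitrary, integrals of bounded measurable g converge as soon as D_f tends
   to 0 in either argument; indicators give setwise convergence, bounded
   continuous functions weak convergence. *)

Section convex_on_theory.
Context {R : realType} {I : set R}.
Implicit Types (f : R -> R) (c s x y z : R).

Lemma convex_on_chord {f} x y z : convex_on f I -> I x -> I z -> x < y < z ->
  f y * (z - x) <= (z - y) * f x + (y - x) * f z.
Proof.
move=> cvx Ix Iz /andP[xy yz].
have zx : 0 < z - x by lra.
pose t := (z - y) / (z - x).
have t01 : 0 <= t <= 1 by rewrite ler_pdivrMr // divr_ge0 //; lra.
have tE : t * x + (1 - t) * z = y by rewrite /t; field; lra.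
have := cvx x z t Ix Iz t01; rewrite tE -(ler_pM2r zx).
suff -> : (t * f x + (1 - t) * f z) * (z - x) = (z - y) * f x + (y - x) * f z by [].
by rewrite /t; field; lra.
Qed.

Lemma convex_on_tilt {f} s c : convex_on f I -> convex_on (fun x => f x - s * (x - c)) I.
Proof. by move=> cvx x y t Ix Iy t01; have := cvx x y t Ix Iy t01; lra. Qed.

Lemma strictly_convex_on_tilt {f} s c : strictly_convex_on f I ->
  strictly_convex_on (fun x => f x - s * (x - c)) I.
Proof. by move=> cvx x y t Ix Iy xy t01; have := cvx x y t Ix Iy xy t01; lra. Qed.

Lemma convex_on_subgradient {f} c x0 y0 : convex_on f I -> I x0 -> I y0 ->
  x0 < c < y0 -> exists s, forall x, I x -> f c + s * (x - c) <= f x.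
Proof.
move=> cvx Ix0 Iy0 /andP[x0c cy0].
pose S := [set (f c - f x) / (c - x) | x in [set x | I x /\ x < c]].
have S_ub y : I y -> c < y -> ubound S ((f y - f c) / (y - c)).
  move=> Iy cy _ [x [Ix xc] <-].
  have := convex_on_chord x c y cvx Ix Iy; rewrite xc cy => /(_ isT) chord.
  rewrite ler_pdivrMr ?subr_gt0 // mulrAC ler_pdivlMr ?subr_gt0 //; nra.
have S0 : S !=set0 by exists ((f c - f x0) / (c - x0)); exists x0.
have supS : has_sup S by split => //; exists ((f y0 - f c) / (y0 - c)); exact: S_ub.
exists (sup S) => x Ix.
have [xc|cx|->] := ltgtP x c; last by rewrite subrr mulr0 addr0.
- have : S ((f c - f x) / (c - x)) by exists x.
  move/(sup_upper_bound supS); rewrite ler_pdivrMr ?subr_gt0 //; lra.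
- have := ge_sup S0 (S_ub x Ix cx); rewrite ler_pdivlMr ?subr_gt0 //; lra.
Qed.

End convex_on_theory.

Section convex_on_vanishing_minimum.
Context {R : realType} {I : set R} {h : R -> R} {c : R}.
Hypotheses (cvx : convex_on h I) (Ic : I c) (hc : h c = 0)
  (h_ge0 : forall x, I x -> 0 <= h x).

Lemma convex_on_min_nonincreasing x y : I x -> x <= y <= c -> h y <= h x.
Proof.
move=> Ix /andP[]; rewrite le_eqVlt => /predU1P[-> //|xy].
rewrite le_eqVlt => /predU1P[->|yc]; first by rewrite hc; exact: h_ge0 _ Ix.
have := convex_on_chord x y c cvx Ix Ic; rewrite xy yc hc mulr0 addr0 => /(_ isT).
have := h_ge0 x Ix; nra.
Qed.

Lemma convex_on_min_nondecreasing x y : I y -> c <= x <= y -> h x <= h y.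
Proof.
move=> Iy /andP[]; rewrite le_eqVlt => /predU1P[<-|cx].
  by rewrite hc => _; exact: h_ge0 _ Iy.
rewrite le_eqVlt => /predU1P[-> //|xy].
have := convex_on_chord c x y cvx Ic Iy; rewrite cx xy hc mulr0 add0r => /(_ isT).
have := h_ge0 y Iy; nra.
Qed.

Lemma convex_on_min_growth d x : 0 < d -> I (c - d) -> I (c + d) -> I x ->
  Num.min (h (c - d)) (h (c + d)) * (`|x - c| - d) <= d * h x.
Proof.
move=> d0 Il Ir Ix; set m := Num.min _ _.
have m_ge0 : 0 <= m by rewrite le_min !h_ge0.
have hx_ge0 := h_ge0 x Ix.
have [xr|xr] := leP (c + d) x.
  have m_le : m <= h (c + d) by rewrite ge_min lexx orbT.
  have chord : h (c + d) * (x - c) <= d * h x.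
    have [<-|cdx] := eqVneq (c + d) x; first by rewrite addrAC subrr add0r mulrC.
    have := convex_on_chord c (c + d) x cvx Ic Ix.
    rewrite hc mulr0 add0r ltrDl d0 lt_neqAle cdx xr => /(_ isT).
    by rewrite addrAC subrr add0r.
  rewrite ger0_norm; nra.
have [xl|xl] := leP x (c - d).
  have m_le : m <= h (c - d) by rewrite ge_min lexx.
  have chord : h (c - d) * (c - x) <= d * h x.
    have [->|xcd] := eqVneq x (c - d); first by rewrite subKr mulrC.
    have := convex_on_chord x (c - d) c cvx Ix Ic.
    rewrite hc mulr0 addr0 gtrDl oppr_lt0 d0 lt_neqAle xcd xl andbT => /(_ isT).
    by rewrite subKr.
  rewrite ltr0_norm; nra.
have : `|x - c| - d <= 0 by rewrite subr_le0 ler_distlC; lra.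
nra.
Qed.

End convex_on_vanishing_minimum.

Lemma strictly_convex_on_gt0 {R : realType} {J : set R} {h : R -> R} {c x : R} :
  strictly_convex_on h J -> J c -> J x -> x != c -> h c = 0 ->
  0 <= h ((x + c) / 2) -> 0 < h x.
Proof.
move=> cvx Jc Jx xc hc mid_ge0.
have := cvx x c (1 / 2) Jx Jc xc; rewrite hc mulr0 addr0.
have -> : 1 / 2 * x + (1 - 1 / 2) * c = (x + c) / 2 by field.
move=> /(_ ltac:(apply/andP; split; lra)); lra.
Qed.

Section one_sided_limits.
Context {R : realType}.
Implicit Types (g l phi : R -> R) (x c : R).

Lemma lim_at_right_ge g l phi x c : x < c ->
  {in `]x, c[ &, nonincreasing_fun (g \- l)} ->
  {for x, continuous l} -> {for x, continuous phi} ->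
  (forall y, x < y < c -> phi y <= g y) ->
  ((phi x)%:E <= lim ((g y)%:E @[y --> x^'+]))%E.
Proof.
move=> xc mono l_cont phi_cont phi_le.
set L := ereal_sup [set (g y - l y)%:E | y in `]x, c[].
have gl_cvg : ((g y - l y)%:E @[y --> x^'+] --> L)%E.
  apply: nonincreasing_at_right_cvge; first by rewrite bnd_simp.
  by move=> u v Iu Iv uv; rewrite lee_fin; exact: mono.
have EFin_cvg (k : R -> R) : {for x, continuous k} -> ((k y)%:E @[y --> x^'+] --> (k x)%:E)%E.
  by move=> k_cont; apply: cvg_EFin; [near=> y | exact: cvg_at_right_filter].
have g_cvg : ((g y)%:E @[y --> x^'+] --> L + (l x)%:E)%E.
  have -> : (fun y => (g y)%:E) = (fun y => (g y - l y)%:E + (l y)%:E)%E.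
    by apply: funext => y; rewrite -EFinD subrK.
  by apply: cvgeD; [exact: fin_num_adde_defl | exact: gl_cvg | exact: EFin_cvg].
rewrite (cvg_lim _ g_cvg) //; apply: lee_cvg_to (EFin_cvg _ phi_cont) g_cvg _.
near=> y; rewrite lee_fin; apply: phi_le; apply/andP; split.
  by near: y; exact: nbhs_right_gt.
by near: y; exact: nbhs_right_lt.
Unshelve. all: end_near. Qed.

Lemma lim_at_left_ge g l phi x c : c < x ->
  {in `]c, x[ &, nondecreasing_fun (g \- l)} ->
  {for x, continuous l} -> {for x, continuous phi} ->
  (forall y, c < y < x -> phi y <= g y) ->
  ((phi x)%:E <= lim ((g y)%:E @[y --> x^'-]))%E.
Proof.
move=> cx mono l_cont phi_cont phi_le.
have -> : (g y)%:E @[y --> x^'-] = (g (- y))%:E @[y --> (- x)^'+].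
  by rewrite -[in LHS](opprK x) at_leftN.
have Nx_cont (k : R -> R) : {for x, continuous k} -> {for - x, continuous (k \o -%R)}.
  move=> k_cont; apply: continuous_comp; first exact: opp_continuous.
  by rewrite /= opprK.
rewrite -[in (phi x)%:E](opprK x).
apply: (lim_at_right_ge (g \o -%R) _ _ _ (- c) _ _ (Nx_cont _ l_cont) (Nx_cont _ phi_cont))
  => /=.
- by rewrite ltrN2.
- move=> u v; rewrite !in_itv /= => /andP[xu uc] /andP[xv vc] uv.
  by apply: mono; rewrite ?in_itv /= ?lerN2 //; apply/andP; split; lra.
- by move=> y /andP[xy yc]; apply: phi_le; apply/andP; split; lra.
Qed.

End one_sided_limits.

Section fext_minorant.
Context {R : realType} {a b : \bar R} {f : R -> R}.
Hypothesis F1f : F1 a b f.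

Lemma F1_oitv1 : oitv a b 1.
Proof. by case: F1f => a1 b1 _ _; rewrite /oitv /= a1 b1. Qed.

Lemma fext_ge (s : R) (phi : R -> R) :
  (forall y, oitv a b y -> s * (y - 1) <= f y) -> continuous phi ->
  (forall y, oitv a b y -> phi y <= f y) -> forall x, ((phi x)%:E <= fext a b f x)%E.
Proof.
move=> subgrad phi_cont phi_le x.
have [a1 b1 cvx f1] := F1f.
pose l y := s * (y - 1).
have l_cont : continuous l.
  by move=> y; apply: cvgMl_tmp; apply: cvgB => //; exact: cvg_cst.
have h_cvx : convex_on (f \- l) (oitv a b) by exact: convex_on_tilt.
have h1 : (f \- l) 1 = 0 by rewrite /= /l f1 subrr mulr0 subr0.
have h_ge0 y : oitv a b y -> 0 <= (f \- l) y by move=> ?; rewrite subr_ge0; exact: subgrad.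
(* Minus its supporting line at 1, f is monotone on each side of 1: this makes
   the one-sided limits defining fext at finite endpoints exist. *)
rewrite /fext; case: ifPn => [axb|_]; first by rewrite lee_fin; exact: phi_le.
case: ifPn => [/eqP ax|_].
  have x1 : x < 1 by rewrite -lte_fin -ax.
  have oy y : x < y < 1 -> oitv a b y.
    by case/andP=> xy y1; rewrite /oitv /= ax lte_fin xy (lt_trans _ b1) ?lte_fin.
  apply: (lim_at_right_ge f l phi _ _ x1 _ (l_cont x) (phi_cont x)).
  - move=> u v; rewrite !in_itv /= => /andP[xu u1] /andP[_ v1] uv.
    by apply: (convex_on_min_nonincreasing h_cvx F1_oitv1 h1 h_ge0);
      [apply: oy; rewrite xu | rewrite uv ltW].
  - by move=> y xy; apply: phi_le; exact: oy.
case: ifPn => [/eqP bx|_]; last exact: leey.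
have x1 : 1 < x by rewrite -lte_fin -bx.
have oy y : 1 < y < x -> oitv a b y.
  by case/andP=> y1 yx; rewrite /oitv /= bx !lte_fin yx (lt_trans a1) ?lte_fin.
apply: (lim_at_left_ge f l phi _ _ x1 _ (l_cont x) (phi_cont x)).
- move=> u v; rewrite !in_itv /= => /andP[u1 _] /andP[_ vx] uv.
  by apply: (convex_on_min_nondecreasing h_cvx F1_oitv1 h1 h_ge0);
    [apply: oy; rewrite vx (lt_le_trans u1) | rewrite uv ltW].
- by move=> y xy; apply: phi_le; exact: oy.
Qed.

End fext_minorant.

Section fext_measurable.
Context {R : realType}.

Lemma is_interval_oitv (a b : \bar R) : is_interval (oitv a b).
Proof.
move=> x y /andP[ax _] /andP[_ yb] z /andP[xz zy].
by rewrite /oitv /= (lt_le_trans ax) ?(le_lt_trans _ yb) ?lee_fin.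
Qed.

Lemma convex_on_measurable (I : set R) (f : R -> R) :
  is_interval I -> convex_on f I -> measurable_fun I f.
Proof.
move=> I_itv cvx; apply: (measurability (@RGenInftyO.G R)) => [|/= _ [_] [r] -> <-].
  exact: RGenInftyO.measurableE.
apply: is_interval_measurable => x y [Ix fx] [Iy fy] z xzy.
split; first exact: (I_itv x y Ix Iy z xzy).
case/andP: xzy => xz zy.
move: fx fy; rewrite /= !in_itv /= => fx fy.
have [<- //|xz'] := eqVneq x z.
have [-> //|zy'] := eqVneq z y.
have {xz'}xz : x < z by rewrite lt_neqAle xz xz'.
have {zy'}zy : z < y by rewrite lt_neqAle zy zy'.
have := convex_on_chord x z y cvx Ix Iy; rewrite xz zy => /(_ isT) chord.
have : f z * (y - x) < r * (y - x) by nra.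
by rewrite ltr_pM2r ?subr_gt0 ?(lt_trans xz).
Qed.

Lemma measurable_fun_eqEFin (e : \bar R) : measurable_fun [set: R] (fun x => e == x%:E).
Proof.
apply: (measurable_fun_bool true); rewrite setTI.
have -> : (fun x => e == x%:E) @^-1` [set true] = EFin @^-1` [set e].
  by apply/seteqP; split => x /= => [/eqP ->|->]; rewrite ?eqxx.
by rewrite -[X in measurable X]setTI; exact: EFin_measurable (emeasurable_set1 e).
Qed.

Lemma measurable_fext {a b : \bar R} {f : R -> R} :
  convex_on f (oitv a b) -> measurable_fun [set: R] (fext a b f).
Proof.
move=> cvx.
have on_point (e : \bar R) (g : R -> \bar R) D :
    measurable_fun (D `&` (fun x => e == x%:E) @^-1` [set true]) g.
  apply: (@measurable_funS _ _ _ _ [set fine e]).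
  - exact: measurable_set1.
  - by move=> x [_ /= /eqP ->].
  - exact: measurable_fun_set1.
apply: measurable_fun_if => //.
- apply: (measurable_fun_bool true); rewrite setTI.
  exact: is_interval_measurable (is_interval_oitv a b).
- rewrite setTI; apply/measurable_EFinP.
  exact: convex_on_measurable (is_interval_oitv a b) cvx.
apply: (measurable_funS measurableT) => //.
apply: measurable_fun_if; [done | exact: measurable_fun_eqEFin | exact: on_point |].
apply: (measurable_funS measurableT) => //.
by apply: measurable_fun_if; [done | exact: measurable_fun_eqEFin | exact: on_point | done].
Qed.

End fext_measurable.

Lemma le_integral_integrablel {d} {T : measurableType d} {R : realType}
    {mu : {measure set T -> \bar R}} {g h : T -> \bar R} :
  mu.-integrable setT g -> measurable_fun setT h -> (forall x, g x <= h x)%E ->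
  (\int[mu]_x g x <= \int[mu]_x h x)%E.
Proof.
move=> /integrableP[mg _] mh gh; rewrite integralE [leRHS]integralE leeB //.
- apply: ge0_le_integral => //; [exact: measurable_funepos.. |].
  by move=> x _; exact: (funepos_le (fun y _ => gh y) (in_setT x)).
- apply: ge0_le_integral => //; [exact: measurable_funeneg.. |].
  by move=> x _; exact: (funeneg_le (fun y _ => gh y) (in_setT x)).
Qed.

Section density.
Local Open Scope ereal_scope.
Context {d} {T : measurableType d} {R : realType}.

Definition density (nu mu : probability T R) (w : T) : R :=
  fine (Radon_Nikodym (charge_of_finite_measure nu) mu w).

(* Twice the total variation distance between nu and mu when nu << mu. *)
Definition l1_dist (nu mu : probability T R) : \bar R :=
  \int[mu]_w `|density nu mu w - 1|%:E.

Context {nu mu : probability T R}.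
Hypothesis numu : nu `<< mu.

Lemma EFin_density w :
  (density nu mu w)%:E = Radon_Nikodym (charge_of_finite_measure nu) mu w.
Proof. by rewrite fineK //; exact: Radon_Nikodym_fin_num. Qed.

Lemma measurable_density : measurable_fun setT (density nu mu).
Proof. by apply: measurableT_comp => //; exact: fine_measurable. Qed.

Lemma integrable_density : mu.-integrable setT (fun w => (density nu mu w)%:E).
Proof.
by rewrite (funext EFin_density); exact: Radon_Nikodym_integrable.
Qed.

Lemma integral_density : \int[mu]_w (density nu mu w)%:E = 1.
Proof.
rewrite (funext EFin_density) -Radon_Nikodym_integral //.
exact: probability_setT.
Qed.

Lemma integrable_abs_density_sub1 :
  mu.-integrable setT (fun w => `|density nu mu w - 1|%:E).
Proof.
have := integrable_abse (integrableB measurableT integrable_density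
  (finite_measure_integrable_cst mu 1 measurableT)).
by apply: eq_integrable => // w _; rewrite /= -EFinB.
Qed.

Lemma integral_density_change (g : T -> R) : measurable_fun setT g ->
  [bounded g x | x in setT] ->
  \int[nu]_x (g x)%:E = \int[mu]_x (g x * density nu mu x)%:E.
Proof.
move=> mg bg.
have ign : nu.-integrable setT (EFin \o g).
  by apply: measurable_bounded_integrable => //; exact: fin_num_fun_lty (fin_num_measure _).
rewrite -(Radon_Nikodym_change_of_variables numu measurableT ign).
by apply: eq_integral => x _; rewrite /= -EFin_density EFinM.
Qed.

Lemma l1_dist_fin_num : l1_dist nu mu \is a fin_num.
Proof. exact: (integrable_fin_num measurableT integrable_abs_density_sub1). Qed.

End density.

Section fdiv_bounds.
Local Open Scope ereal_scope.
Context {d} {T : measurableType d} {R : realType}.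
Implicit Types nu mu : probability T R.

Lemma fdiv_ge_l1_dist {a b : \bar R} {f : R -> R} {s k dl : R} nu mu :
  convex_on f (oitv a b) ->
  (forall x, (s * (x - 1) + k * (`|x - 1| - dl))%:E <= fext a b f x) ->
  k%:E * (l1_dist nu mu - dl%:E) <= fdiv a b f nu mu.
Proof.
move=> cvx fext_ge; rewrite /fdiv.
case: (pselect (nu `<< mu)) => [numu|_] /=; last exact: leey.
have irho := integrable_density numu.
have iA := integrable_abs_density_sub1 numu.
pose B w := s%:E * (density nu mu w)%:E +
  (k%:E * `|density nu mu w - 1|%:E + (- s - k * dl)%:E).
have i1 : mu.-integrable setT (fun w => s%:E * (density nu mu w)%:E).
  exact: integrableZl.
have i2 : mu.-integrable setT (fun w => k%:E * `|density nu mu w - 1|%:E).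
  exact: integrableZl.
have i3 : mu.-integrable setT (fun=> (- s - k * dl)%:E).
  exact: finite_measure_integrable_cst.
have iB : mu.-integrable setT B.
  by apply: integrableD => //; exact: integrableD.
have intB : \int[mu]_w B w = s%:E + (k%:E * l1_dist nu mu + (- s - k * dl)%:E).
  rewrite integralD //; last exact: integrableD.
  rewrite integralD // !integralZl // integral_density // mule1 integral_cst //.
  by rewrite -[X in _ = _ + (_ + X)]mule1; congr (_ + (_ + _ * _)); exact: probability_setT.
have B_le w : B w <= fext a b f (density nu mu w).
  by apply: le_trans (fext_ge (density nu mu w)); rewrite /B -!EFinM -!EFinD lee_fin; lra.
have mfext : measurable_fun setT (fun w => fext a b f (density nu mu w)).
  exact: measurableT_comp (measurable_fext cvx) (measurable_density numu).
apply: le_trans _ (le_integral_integrablel iB mfext B_le).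
rewrite intB -(fineK (l1_dist_fin_num numu)) -EFinB -!EFinM -!EFinD lee_fin; lra.
Qed.

End fdiv_bounds.

Section integral_dist.
Local Open Scope ereal_scope.
Context {d} {T : measurableType d} {R : realType}.
Implicit Types nu mu : probability T R.

Lemma integral_dist_le_l1_dist {nu mu} {g : T -> R} {M : R} :
  nu `<< mu -> measurable_fun setT g -> (forall x, `|g x| <= M)%R ->
  `|\int[nu]_x (g x)%:E - \int[mu]_x (g x)%:E| <= M%:E * l1_dist nu mu.
Proof.
move=> numu mg gM.
have bg : [bounded g x | x in setT].
  by exists M; split => [|y My x _]; [exact: num_real | exact: le_trans (gM x) (ltW My)].
have igm : mu.-integrable setT (EFin \o g).
  by apply: measurable_bounded_integrable => //; exact: fin_num_fun_lty (fin_num_measure _).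
have igr : mu.-integrable setT (EFin \o (fun x => g x * density nu mu x)%R).
  have := integrableMr measurableT mg bg (integrable_density numu).
  by apply: eq_integrable => // x _; rewrite /= EFinM.
rewrite (integral_density_change numu) // -integralB_EFin //.
have mB : measurable_fun setT (fun x => (g x * density nu mu x)%:E - (g x)%:E).
  apply: emeasurable_funB; apply/measurable_EFinP => //.
  by apply: measurable_funM => //; exact: measurable_density.
apply: le_trans (le_abse_integral _ _ mB) _ => //.
rewrite /l1_dist -integralZl //; last exact: integrable_abs_density_sub1.
apply: ge0_le_integral => //.
- exact: measurableT_comp.
- apply: emeasurable_funM => //; apply/measurable_EFinP.
  by apply: measurableT_comp => //; apply: measurable_funB => //; exact: measurable_density.
- move=> x _; rewrite -EFinB /= -EFinM lee_fin.
  have -> : (g x * density nu mu x - g x = g x * (density nu mu x - 1))%R by ring.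
  by rewrite normrM ler_wpM2r.
Qed.

Lemma integral_dist_le_fdiv {a b : \bar R} {f : R -> R} {s k dl M : R} nu mu {g : T -> R} :
  convex_on f (oitv a b) ->
  (forall x, (s * (x - 1) + k * (`|x - 1| - dl))%:E <= fext a b f x) ->
  (0 < k)%R -> (0 < M)%R -> measurable_fun setT g -> (forall x, `|g x| <= M)%R ->
  `|\int[nu]_x (g x)%:E - \int[mu]_x (g x)%:E| <= (M * dl)%:E + (M / k)%:E * fdiv a b f nu mu.
Proof.
move=> cvx fext_ge k0 M0 mg gM.
have [numu|not_numu] := pselect (nu `<< mu); last first.
  rewrite /fdiv; case: (pselect (nu `<< mu)) => // _ /=.
  by rewrite gt0_muley ?lte_fin ?divr_gt0 // addey // leey.
apply: le_trans (integral_dist_le_l1_dist numu mg gM) _.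
have Mk_ge0 : 0 <= (M / k)%:E by rewrite lee_fin ltW // divr_gt0.
apply: le_trans (leeD2l (M * dl)%:E (lee_wpmul2l Mk_ge0 (fdiv_ge_l1_dist nu mu cvx fext_ge))).
rewrite -(fineK (l1_dist_fin_num numu)) -EFinB -!EFinM -EFinD lee_fin le_eqVlt.
by apply/orP; left; apply/eqP; field; rewrite gt_eqF.
Qed.

End integral_dist.

Lemma abseBC {R : realType} (x y : \bar R) : (`|x - y| = `|y - x|)%E.
Proof. by case: x y => [x| |] [y| |] //=; rewrite distrC. Qed.

Lemma cvge_dist_le {R : realType} (u D : nat -> \bar R) (r : R) :
  D n @[n --> \oo] --> 0%E ->
  (forall eps, 0 < eps -> exists C : R, forall n, (`|u n - r%:E| <= eps%:E + C%:E * D n)%E) ->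
  u n @[n --> \oo] --> r%:E.
Proof.
move=> /fine_cvgP[Dfin D0] bound.
have ufin : \forall n \near \oo, u n \is a fin_num.
  have [C hC] := bound 1 ltr01.
  near=> n; have Dnfin : D n \is a fin_num by near: n.
  have := hC n; rewrite -(fineK Dnfin) -EFinM -EFinD => /le_lt_trans/(_ (ltry _)).
  by rewrite -fin_num_abs fin_numB => /andP[].
apply/fine_cvgP; split => //; apply/cvgrPdist_le => eps eps0.
have [C hC] : exists C : R, forall n, (`|u n - r%:E| <= (eps / 2)%:E + C%:E * D n)%E.
  by apply: bound; rewrite divr_gt0.
have CD0 : C * fine (D n) @[n --> \oo] --> 0 by rewrite -(mulr0 C); apply: cvgMl_tmp.
have CD_small : \forall n \near \oo, `|0 - C * fine (D n)| <= eps / 2.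
  by move/cvgrPdist_le : CD0; apply; rewrite divr_gt0.
near=> n.
have Dnfin : D n \is a fin_num by near: n.
have unfin : u n \is a fin_num by near: n.
have CDn : `|0 - C * fine (D n)| <= eps / 2 by near: n.
have := hC n; rewrite -(fineK Dnfin) -(fineK unfin) -EFinB -EFinM -EFinD abse_EFin lee_fin.
rewrite sub0r normrN in CDn; rewrite /= distrC.
have := ler_norm (C * fine (D n)); lra.
Unshelve. all: end_near. Qed.

Section F1_minorants.
Context {R : realType} {a b : \bar R} {f : R -> R}.
Hypothesis F1f : F1 a b f.

Lemma F1_subgradient1 {e : R} : 0 < e -> [set x | 1 - e < x < 1 + e] `<=` oitv a b ->
  exists s, forall x, oitv a b x -> s * (x - 1) <= f x.
Proof.
move=> e0 nbhd1; have [_ _ cvx f1] := F1f.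
have I_l : oitv a b (1 - e / 2) by apply: nbhd1; rewrite /=; apply/andP; split; lra.
have I_r : oitv a b (1 + e / 2) by apply: nbhd1; rewrite /=; apply/andP; split; lra.
have [|s sub] := convex_on_subgradient 1 _ _ cvx I_l I_r; first by apply/andP; split; lra.
by exists s => x /sub; rewrite f1 add0r.
Qed.

Lemma fext_ge_tilted_abs {e s dl : R} :
  [set x | 1 - e < x < 1 + e] `<=` oitv a b ->
  strictly_convex_on f [set x | 1 - e < x < 1 + e] ->
  (forall x, oitv a b x -> s * (x - 1) <= f x) -> 0 < dl < e ->
  exists2 k, 0 < k &
    forall x, ((s * (x - 1) + k * (`|x - 1| - dl))%:E <= fext a b f x)%E.
Proof.
move=> nbhd1 scvx subgrad /andP[dl0 dle].
have [_ _ cvx f1] := F1f.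
pose h x := f x - s * (x - 1).
have h1 : h 1 = 0 by rewrite /h f1 subrr mulr0 subr0.
have h_ge0 x : oitv a b x -> 0 <= h x by move=> ox; rewrite subr_ge0 subgrad.
have h_gt0 x : 1 - e < x < 1 + e -> x != 1 -> 0 < h x.
  move=> xe x1.
  have J1 : 1 - e < 1 < 1 + e by apply/andP; split; lra.
  have Jmid : 1 - e < (x + 1) / 2 < 1 + e by case/andP: xe => *; apply/andP; split; lra.
  exact: (strictly_convex_on_gt0 (strictly_convex_on_tilt s 1 scvx) J1 xe x1 h1
    (h_ge0 _ (nbhd1 _ Jmid))).
have I_l : oitv a b (1 - dl) by apply: nbhd1; rewrite /=; apply/andP; split; lra.
have I_r : oitv a b (1 + dl) by apply: nbhd1; rewrite /=; apply/andP; split; lra.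
pose m := Num.min (h (1 - dl)) (h (1 + dl)).
have m0 : 0 < m.
  rewrite lt_min; apply/andP; split; apply: h_gt0.
  - by apply/andP; split; lra.
  - by rewrite lt_eqF //; lra.
  - by apply/andP; split; lra.
  - by rewrite gt_eqF //; lra.
exists (m / dl); first exact: divr_gt0.
apply: (fext_ge F1f s (fun y => s * (y - 1) + m / dl * (`|y - 1| - dl)) subgrad) => [y|y oy].
  apply: cvgD; apply: cvgMl_tmp; first by apply: cvgB => //; exact: cvg_cst.
  apply: cvgB; last exact: cvg_cst.
  by apply: cvg_norm; apply: cvgB => //; exact: cvg_cst.
have := convex_on_min_growth (convex_on_tilt s 1 cvx) (F1_oitv1 F1f) h1 h_ge0 _ _
  dl0 I_l I_r oy.
rewrite -/m => growth.
suff : m / dl * (`|y - 1| - dl) <= f y - s * (y - 1) by lra.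
by rewrite mulrAC ler_pdivrMr // [X in _ <= X]mulrC.
Qed.

End F1_minorants.

Section fdiv_cvg.
Context {R : realType} {a b : \bar R} {f : R -> R} {e : R}.
Hypotheses (F1f : F1 a b f) (e0 : 0 < e)
  (nbhd1 : [set x | 1 - e < x < 1 + e] `<=` oitv a b)
  (scvx : strictly_convex_on f [set x | 1 - e < x < 1 + e]).
Context {d} {T : measurableType d} {g : T -> R} {M : R}.
Hypotheses (M0 : 0 < M) (mg : measurable_fun setT g) (gM : forall x, `|g x| <= M).

Lemma integral_dist_le_eps_fdiv eps : 0 < eps ->
  exists C : R, forall nu mu : probability T R,
    (`|\int[nu]_x (g x)%:E - \int[mu]_x (g x)%:E| <= eps%:E + C%:E * fdiv a b f nu mu)%E.
Proof.
move=> eps0; have [s subgrad] := F1_subgradient1 F1f e0 nbhd1.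
have [_ _ cvx _] := F1f.
pose dl := Num.min (e / 2) (eps / M).
have dl0 : 0 < dl by rewrite lt_min !divr_gt0.
have dle : dl < e by rewrite gt_min; apply/orP; left; have := e0; lra.
have Mdl : M * dl <= eps by rewrite mulrC -ler_pdivlMr // ge_min lexx orbT.
have [k k0 fext_ge] := fext_ge_tilted_abs F1f nbhd1 scvx subgrad (introT andP (conj dl0 dle)).
exists (M / k) => nu mu.
apply: le_trans (integral_dist_le_fdiv nu mu cvx fext_ge k0 M0 mg gM) _.
by rewrite leeD2r // lee_fin.
Qed.

Lemma fdiv_cvg0_integral_cvg {Pn : nat -> probability T R} {P : probability T R} :
  (fdiv a b f (Pn n) P @[n --> \oo] --> 0%E \/ fdiv a b f P (Pn n) @[n --> \oo] --> 0%E) ->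
  (\int[Pn n]_x (g x)%:E)%E @[n --> \oo] --> (\int[P]_x (g x)%:E)%E.
Proof.
move=> fdiv_cvg0.
have bg : [bounded g x | x in setT].
  by exists M; split => [|y My x _]; [exact: num_real | exact: le_trans (gM x) (ltW My)].
have ig : P.-integrable setT (EFin \o g).
  by apply: measurable_bounded_integrable => //; exact: fin_num_fun_lty (fin_num_measure _).
rewrite -(fineK (integrable_fin_num measurableT ig)).
case: fdiv_cvg0 => fdiv_cvg0; apply: (cvge_dist_le _ _ _ fdiv_cvg0) => eps eps0;
  have [C est] := integral_dist_le_eps_fdiv eps eps0; exists C => n;
  rewrite fineK ?(integrable_fin_num measurableT ig) //.
- exact: est.
- by rewrite abseBC; exact: est.
Qed.

End fdiv_cvg.

Theorem theorem10 (R : realType) (a b : \bar R) (f : R -> R) :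
  F1 a b f ->
  (interior [set y : R | (legendre a b f y < +oo)%E]) (rderiv f 1) ->
  (exists2 e : R, 0 < e &
     [set x : R | 1 - e < x < 1 + e] `<=` oitv a b /\
     strictly_convex_on f [set x : R | 1 - e < x < 1 + e]) ->
  (forall (d : measure_display) (T : measurableType d)
          (Pn : nat -> probability T R) (P : probability T R),
     (fdiv a b f (Pn n) P @[n --> \oo] --> 0%E \/
      fdiv a b f P (Pn n) @[n --> \oo] --> 0%E) ->
     forall A : set T, measurable A -> Pn n A @[n --> \oo] --> P A)
  /\
  (forall (T : pseudoPMetricType R), hausdorff_space T ->
   forall (Pn : nat -> probability (g_sigma_algebraType (@open T)) R)
          (P : probability (g_sigma_algebraType (@open T)) R),
     (fdiv a b f (Pn n) P @[n --> \oo] --> 0%E \/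
      fdiv a b f P (Pn n) @[n --> \oo] --> 0%E) ->
     forall g : T -> R, continuous g -> (exists M : R, forall x, `|g x| <= M) ->
       (\int[Pn n]_x (g x)%:E)%E @[n --> \oo] --> (\int[P]_x (g x)%:E)%E).
Proof.
move=> F1f _ [e e0 [nbhd1 scvx]]; split.
- move=> d T Pn P fdiv_cvg0 A mA.
  have int_indic (mu : probability T R) : (\int[mu]_x (\1_A x)%:E)%E = mu A.
    by rewrite integral_indic // setIT.
  rewrite -int_indic; under eq_fun do rewrite -int_indic.
  apply: (fdiv_cvg0_integral_cvg F1f e0 nbhd1 scvx ltr01 (measurable_indic mA) _ fdiv_cvg0).
  by move=> x; rewrite indicE; case: (x \in A); rewrite ?normr1 ?normr0.
- move=> T _ Pn P fdiv_cvg0 g g_cont [M gM].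
  have M1 : 0 < `|M| + 1 by rewrite ltr_pwDr.
  apply: (fdiv_cvg0_integral_cvg F1f e0 nbhd1 scvx M1 _ _ fdiv_cvg0).
  + apply: (measurability (@RGenOpens.G R)) => [|/= _ [_] [x] [y] -> <-].
      exact: RGenOpens.measurableE.
    apply: sub_sigma_algebra; rewrite setTI.
    by move/continuousP : g_cont; apply; exact: interval_open.
  + by move=> x; rewrite (le_trans (gM x)) // ler_wpDr // ler_norm.
Qed.
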